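(* Let $\Pi=(\iota,\tau,\beta)$ be a safety problem. If $\Pi$ has a proof in the incremental forward-backward proof system $\mathbf{FBI}$, then $\Pi$ is safe.
   Context: A first-order vocabulary $\Sigma$ consists of constant, function and relation symbols; $\Sigma'=\{a' : a\in\Sigma\}$ is a disjoint copy, and for a formula $\varphi$ over $\Sigma$, $\varphi'$ denotes $\varphi$ with every symbol replaced by its primed copy. A state is a first-order structure over $\Sigma$. A safety problem is a triple $(\iota,\tau,\beta)$, where $\iota$ (initial states) and $\beta$ (bad states) are closed formulas over $\Sigma$ and $\tau$ (transitions) is a closed formula over $\Sigma\uplus\Sigma'$. A pair of states $(s,t)$ over a common domain is a transition if the structure over $\Sigma\uplus\Sigma'$ interpreting $\Sigma$ as in $s$ and $\Sigma'$ as in $t$ satisfies $\tau$. A trace is a finite sequence of states over a common domain whose consecutive states form transitions. The problem is safe if there is no trace $s_0,\dots,s_k$ with $s_0\models\iota$ and $s_k\models\beta$. $A\Rightarrow B$ means the implication $A\to B$ is valid. $\tau^{-1}$ denotes $\tau$ with each symbol of $\Sigma$ and its primed counterpart swapped. Proofs: a proof of $\Pi$ in a system is a finite tree whose nodes are safety problems, whose root is $\Pi$, and in which each node together with its children is an instance of one of the system's rules, with side conditions valid. $\mathbf{FBI}$ has the rules ($\varphi$ ranges over closed formulas over $\Sigma$): (Ind): no premises; conclusion $(\iota,\tau,\neg\varphi)$; side conditions $\iota\Rightarrow\varphi$ and $\varphi\wedge\tau\Rightarrow\varphi'$. (Cons): premise $(\iota,\tau,\neg\varphi)$; conclusion $(\iota,\tau,\beta)$;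 side condition $\varphi\Rightarrow\neg\beta$. (Inc): premises $(\iota,\tau,\neg\varphi)$ and $(\iota\wedge\varphi,\ \tau\wedge\varphi\wedge\varphi',\ \beta\wedge\varphi)$; conclusion $(\iota,\tau,\beta)$. (Rev): premise $(\beta,\tau^{-1},\iota)$; conclusion $(\iota,\tau,\beta)$. *)

From mathcomp Require Import ssreflect ssrfun ssrbool eqtype ssrnat fintype.

Set Implicit Arguments.
Unset Strict Implicit.
Unset Printing Implicit Defensive.

(* A vocabulary: function symbols (constants are the 0-ary ones) and
   relation symbols, each with an arity. *)
Record vocab := Vocab {
  fsym : Type;
  rsym : Type;
  farity : fsym -> nat;
  rarity : rsym -> nat }.

Inductive term (S : vocab) : Type :=
  | T_var : nat -> term S
  | T_app (f : fsym S) : ('I_(farity f) -> term S) -> term S.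

Inductive formula (S : vocab) : Type :=
  | F_false : formula S
  | F_true : formula S
  | F_eq : term S -> term S -> formula S
  | F_rel (r : rsym S) : ('I_(rarity r) -> term S) -> formula S
  | F_not : formula S -> formula S
  | F_and : formula S -> formula S -> formula S
  | F_or : formula S -> formula S -> formula S
  | F_imp : formula S -> formula S -> formula S
  | F_forall : nat -> formula S -> formula S
  | F_exists : nat -> formula S -> formula S.

Arguments F_false {S}.
Arguments F_true {S}.

Fixpoint tfree (S : vocab) (n : nat) (t : term S) : Prop :=
  match t with
  | T_var m => m = n
  | T_app f args => exists i, tfree n (args i)
  end.

Fixpoint ffree (S : vocab) (n : nat) (p : formula S) : Prop :=
  match p with
  | F_false | F_true => False
  | F_eq t u => tfree n t \/ tfree n u
  | F_rel r args => exists i, tfree n (args i)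
  | F_not q => ffree n q
  | F_and q1 q2 | F_or q1 q2 | F_imp q1 q2 => ffree n q1 \/ ffree n q2
  | F_forall m q | F_exists m q => m <> n /\ ffree n q
  end.

Definition closed (S : vocab) (p : formula S) : Prop := forall n, ~ ffree n p.

Record structure (S : vocab) (D : Type) := Structure {
  fint : forall f : fsym S, ('I_(farity f) -> D) -> D;
  rint : forall r : rsym S, ('I_(rarity r) -> D) -> Prop }.
Arguments fint {S D} s f _.
Arguments rint {S D} s r _.
Arguments T_app {S} f _.
Arguments F_rel {S} r _.

Fixpoint teval (S : vocab) (D : Type) (M : structure S D) (e : nat -> D)
  (t : term S) : D :=
  match t with
  | T_var n => e n
  | T_app f args => fint M f (fun i => teval M e (args i))
  end.

Definition upd (D : Type) (e : nat -> D) (n : nat) (d : D) : nat -> D :=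
  fun m => if m == n then d else e m.

Fixpoint holds (S : vocab) (D : Type) (M : structure S D) (e : nat -> D)
  (p : formula S) : Prop :=
  match p with
  | F_false => False
  | F_true => True
  | F_eq t u => teval M e t = teval M e u
  | F_rel r args => rint M r (fun i => teval M e (args i))
  | F_not q => ~ holds M e q
  | F_and q1 q2 => holds M e q1 /\ holds M e q2
  | F_or q1 q2 => holds M e q1 \/ holds M e q2
  | F_imp q1 q2 => holds M e q1 -> holds M e q2
  | F_forall n q => forall d, holds M (upd e n d) q
  | F_exists n q => exists d, holds M (upd e n d) q
  end.

(* M |= p  (for closed p this does not depend on the assignment). *)
Definition models (S : vocab) (D : Type) (M : structure S D) (p : formula S) :=
  forall e : nat -> D, holds M e p.

(* Validity: true in every structure with a nonempty carrier. *)
Definition valid (S : vocab) (p : formula S) : Prop :=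
  forall (D : Type) (d0 : D) (M : structure S D), models M p.

Definition entails (S : vocab) (A B : formula S) : Prop := valid (F_imp A B).

(* inl = unprimed symbol a, inr = primed copy a'. *)
Definition dvocab (S : vocab) : vocab :=
  @Vocab (fsym S + fsym S)%type (rsym S + rsym S)%type
    (fun f => match f with inl g => farity g | inr g => farity g end)
    (fun r => match r with inl g => rarity g | inr g => rarity g end).

Fixpoint tlift (S : vocab) (primed : bool) (t : term S) : term (dvocab S) :=
  match t with
  | T_var n => T_var (dvocab S) n
  | T_app f args =>
      if primed then @T_app (dvocab S) (inr f) (fun i => tlift primed (args i))
      else @T_app (dvocab S) (inl f) (fun i => tlift primed (args i))
  end.

Fixpoint flift (S : vocab) (primed : bool) (p : formula S) : formula (dvocab S) :=
  match p with
  | F_false => F_false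
  | F_true => F_true
  | F_eq t u => F_eq (tlift primed t) (tlift primed u)
  | F_rel r args =>
      if primed then @F_rel (dvocab S) (inr r) (fun i => tlift primed (args i))
      else @F_rel (dvocab S) (inl r) (fun i => tlift primed (args i))
  | F_not q => F_not (flift primed q)
  | F_and q1 q2 => F_and (flift primed q1) (flift primed q2)
  | F_or q1 q2 => F_or (flift primed q1) (flift primed q2)
  | F_imp q1 q2 => F_imp (flift primed q1) (flift primed q2)
  | F_forall n q => F_forall n (flift primed q)
  | F_exists n q => F_exists n (flift primed q)
  end.

Definition unprimed (S : vocab) (p : formula S) := flift false p.
Definition primed (S : vocab) (p : formula S) := flift true p.

Fixpoint tswap (S : vocab) (t : term (dvocab S)) : term (dvocab S) :=
  match t with
  | T_var n => T_var (dvocab S) n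
  | T_app f args =>
      let args' := fun i => tswap (args i) in
      match f return ('I_(@farity (dvocab S) f) -> term (dvocab S)) ->
                     term (dvocab S) with
      | inl g => fun a => @T_app (dvocab S) (inr g) a
      | inr g => fun a => @T_app (dvocab S) (inl g) a
      end args'
  end.

Fixpoint fswap (S : vocab) (p : formula (dvocab S)) : formula (dvocab S) :=
  match p with
  | F_false => F_false
  | F_true => F_true
  | F_eq t u => F_eq (tswap t) (tswap u)
  | F_rel r args =>
      let args' := fun i => tswap (args i) in
      match r return ('I_(@rarity (dvocab S) r) -> term (dvocab S)) ->
                     formula (dvocab S) with
      | inl g => fun a => @F_rel (dvocab S) (inr g) a
      | inr g => fun a => @F_rel (dvocab S) (inl g) a
      end args'
  | F_not q => F_not (fswap q)
  | F_and q1 q2 => F_and (fswap q1) (fswap q2)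
  | F_or q1 q2 => F_or (fswap q1) (fswap q2)
  | F_imp q1 q2 => F_imp (fswap q1) (fswap q2)
  | F_forall n q => F_forall n (fswap q)
  | F_exists n q => F_exists n (fswap q)
  end.

Record problem (S : vocab) := Problem {
  init : formula S;
  trans : formula (dvocab S);
  bad : formula S }.

Definition closed_problem (S : vocab) (P : problem S) : Prop :=
  closed (init P) /\ closed (trans P) /\ closed (bad P).

Definition pair_structure (S : vocab) (D : Type) (s t : structure S D) :
  structure (dvocab S) D :=
  @Structure (dvocab S) D
    (fun f => match f return ('I_(@farity (dvocab S) f) -> D) -> D with
              | inl g => fint s g | inr g => fint t g end)
    (fun r => match r return ('I_(@rarity (dvocab S) r) -> D) -> Prop with
              | inl g => rint s g | inr g => rint t g end).

Definition is_transition (S : vocab) (tau : formula (dvocab S)) (D : Type)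
  (s t : structure S D) : Prop :=
  models (pair_structure s t) tau.

Definition safe (S : vocab) (P : problem S) : Prop :=
  forall (D : Type) (d0 : D) (s : nat -> structure S D) (k : nat),
    (forall i, i < k -> is_transition (trans P) (s i) (s i.+1)) ->
    models (s 0) (init P) -> models (s k) (bad P) -> False.

Inductive FBI (S : vocab) : problem S -> Prop :=
  | FBI_Ind (iota : formula S) (tau : formula (dvocab S)) (phi : formula S) :
      closed phi ->
      entails iota phi ->
      entails (F_and (unprimed phi) tau) (primed phi) ->
      FBI (Problem iota tau (F_not phi))
  | FBI_Cons (iota : formula S) (tau : formula (dvocab S)) (beta phi : formula S) :
      closed phi ->
      entails phi (F_not beta) ->
      FBI (Problem iota tau (F_not phi)) ->
      FBI (Problem iota tau beta)
  | FBI_Inc (iota : formula S) (tau : formula (dvocab S)) (beta phi : formula S) :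
      closed phi ->
      FBI (Problem iota tau (F_not phi)) ->
      FBI (Problem (F_and iota phi)
                   (F_and (F_and tau (unprimed phi)) (primed phi))
                   (F_and beta phi)) ->
      FBI (Problem iota tau beta)
  | FBI_Rev (iota : formula S) (tau : formula (dvocab S)) (beta : formula S) :
      FBI (Problem beta (fswap tau) iota) ->
      FBI (Problem iota tau beta).

(* For a closed phi, safety of (iota, tau, ~phi)
   says exactly that phi holds in every reachable state; hence in (Inc) every
   trace of the original problem is a trace of the problem restricted to phi,
   and (Cons) only shrinks the set of bad states.  (Rev) reads a trace
   backwards, which turns tau into its swapped copy. *)
From Stdlib Require Import Classical FunctionalExtensionality.
From mathcomp Require Import ssreflect ssrfun ssrbool eqtype ssrnat fintype.

Set Implicit Arguments.
Unset Strict Implicit.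
Unset Printing Implicit Defensive.

Section Semantics.

Variables (S : vocab) (D : Type).

Lemma teval_tlift (s t : structure S D) e b (u : term S) :
  teval (pair_structure s t) e (tlift b u) = teval (if b then t else s) e u.
Proof.
elim: u => [n|f args IH] //=.
by case: b IH => IH /=; congr (_ _); apply: functional_extensionality.
Qed.

Lemma holds_flift (s t : structure S D) b (p : formula S) e :
  holds (pair_structure s t) e (flift b p) <-> holds (if b then t else s) e p.
Proof.
elim: p e => //= [u v|r args|q IH|q1 IH1 q2 IH2|q1 IH1 q2 IH2|q1 IH1 q2 IH2
                 |n q IH|n q IH] e.
- by rewrite !teval_tlift.
- have E := functional_extensionality _ _ (fun i => teval_tlift s t e b (args i)).
  by case: b E => /= ->.
- by rewrite IH.
- by rewrite IH1 IH2.
- by rewrite IH1 IH2.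
- by rewrite IH1 IH2.
- by split=> H d; apply/IH.
- by split=> -[d H]; exists d; apply/IH.
Qed.

Lemma teval_tswap (s t : structure S D) e (u : term (dvocab S)) :
  teval (pair_structure s t) e (tswap u) = teval (pair_structure t s) e u.
Proof.
elim: u => [n|f args IH] //=.
by case: f args IH => g args IH /=; congr (_ _); apply: functional_extensionality.
Qed.

Lemma holds_fswap (s t : structure S D) (p : formula (dvocab S)) e :
  holds (pair_structure s t) e (fswap p) <-> holds (pair_structure t s) e p.
Proof.
elim: p e => //= [u v|r args|q IH|q1 IH1 q2 IH2|q1 IH1 q2 IH2|q1 IH1 q2 IH2
                 |n q IH|n q IH] e.
- by rewrite !teval_tswap.
- have E := functional_extensionality _ _ (fun i => teval_tswap s t e (args i)).
  by case: r args E => g args /= ->.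
- by rewrite IH.
- by rewrite IH1 IH2.
- by rewrite IH1 IH2.
- by rewrite IH1 IH2.
- by split=> H d; apply/IH.
- by split=> -[d H]; exists d; apply/IH.
Qed.

Lemma teval_agree (M : structure S D) (u : term S) e e' :
  (forall n, tfree n u -> e n = e' n) -> teval M e u = teval M e' u.
Proof.
elim: u e e' => [n|f args IH] e e' eq_e /=; first exact: eq_e.
congr (_ _); apply: functional_extensionality => i.
by apply: IH => n free_n; apply: eq_e; exists i.
Qed.

Lemma holds_agree (M : structure S D) (p : formula S) e e' :
  (forall n, ffree n p -> e n = e' n) -> (holds M e p <-> holds M e' p).
Proof.
elim: p e e' => //= [u v|r args|q IH|q1 IH1 q2 IH2|q1 IH1 q2 IH2|q1 IH1 q2 IH2
                     |m q IH|m q IH] e e' eq_e.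
- by rewrite (@teval_agree M u e e') ?(@teval_agree M v e e') // => n ?;
    apply: eq_e; [right|left].
- have E : (fun i => teval M e (args i)) = (fun i => teval M e' (args i)).
    apply: functional_extensionality => i; apply: teval_agree => n free_n.
    by apply: eq_e; exists i.
  by rewrite E.
- by rewrite (IH e e').
- by rewrite (IH1 e e') ?(IH2 e e') // => n ?; apply: eq_e; [right|left].
- by rewrite (IH1 e e') ?(IH2 e e') // => n ?; apply: eq_e; [right|left].
- by rewrite (IH1 e e') ?(IH2 e e') // => n ?; apply: eq_e; [right|left].
- suff eq_upd d : holds M (upd e m d) q <-> holds M (upd e' m d) q.
    by split=> H d; apply/eq_upd.
  apply: IH => n free_n; rewrite /upd; case: eqP => // /nesym m_n.
  exact: eq_e.
- suff eq_upd d : holds M (upd e m d) q <-> holds M (upd e' m d) q.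
    by split=> -[d H]; exists d; apply/eq_upd.
  apply: IH => n free_n; rewrite /upd; case: eqP => // /nesym m_n.
  exact: eq_e.
Qed.

Lemma closed_models (M : structure S D) (p : formula S) e :
  closed p -> holds M e p -> models M p.
Proof. by move=> closed_p Hp e'; apply/(@holds_agree M p e e') => // n /closed_p. Qed.

Lemma entails_models (d0 : D) (M : structure S D) (A B : formula S) :
  entails A B -> models M A -> models M B.
Proof. by move=> AB MA e; apply: AB d0 M e (MA e). Qed.

Lemma is_transition_fswap (tau : formula (dvocab S)) (s t : structure S D) :
  is_transition (fswap tau) s t <-> is_transition tau t s.
Proof. by split=> tr e; apply/holds_fswap. Qed.

Lemma inductive_step (d0 : D) (tau : formula (dvocab S)) (phi : formula S)
    (s t : structure S D) :
  entails (F_and (unprimed phi) tau) (primed phi) ->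
  models s phi -> is_transition tau s t -> models t phi.
Proof.
move=> step_phi s_phi tr e; apply/(holds_flift s t true).
by apply: (step_phi D d0 (pair_structure s t) e); split; [apply/(holds_flift s t false) | apply: tr].
Qed.

Definition is_trace (tau : formula (dvocab S)) (s : nat -> structure S D)
    (k : nat) : Prop :=
  forall i, i < k -> is_transition tau (s i) (s i.+1).

End Semantics.

Section Safety.

Variables (S : vocab) (iota : formula S) (tau : formula (dvocab S)).

(* As in [safe] and [valid], only nonempty carriers (witnessed by [d0]) count. *)
Definition invariant (phi : formula S) : Prop :=
  forall (D : Type) (d0 : D) (s : nat -> structure S D) (k : nat),
    is_trace tau s k -> models (s 0) iota -> models (s k) phi.

Lemma is_trace_prefix (D : Type) (s : nat -> structure S D) i k :
  i <= k -> is_trace tau s k -> is_trace tau s i.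
Proof. by move=> le_ik tr j lt_ji; apply: tr; apply: leq_trans le_ik. Qed.

Lemma is_trace_rev (D : Type) (s : nat -> structure S D) k :
  is_trace tau s k -> is_trace (fswap tau) (fun j => s (k - j)) k.
Proof.
move=> tr j lt_jk; apply/is_transition_fswap.
rewrite -[k - j](subnSK lt_jk); apply: tr.
by rewrite ltn_subrL (leq_ltn_trans (leq0n j) lt_jk).
Qed.

Lemma inductive_invariant (phi : formula S) :
  entails iota phi -> entails (F_and (unprimed phi) tau) (primed phi) ->
  invariant phi.
Proof.
move=> init_phi step_phi D d0 s; elim=> [|k IH] tr s0.
  exact: entails_models init_phi s0.
apply: (inductive_step d0 step_phi (IH (is_trace_prefix (leqnSn k) tr) s0)).
exact: tr.
Qed.

Lemma invariant_safe_not (phi : formula S) :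
  invariant phi -> safe (Problem iota tau (F_not phi)).
Proof. by move=> inv D d0 s k tr s0 /(_ (fun=> d0)); apply; apply: inv. Qed.

Lemma safe_not_invariant (phi : formula S) :
  closed phi -> safe (Problem iota tau (F_not phi)) -> invariant phi.
Proof.
move=> closed_phi sf D d0 s k tr s0.
have [|not_phi] := classic (holds (s k) (fun=> d0) phi).
  exact: closed_models.
case: (sf D d0 s k tr s0).
exact: (@closed_models S D _ (F_not phi) _ closed_phi not_phi).
Qed.

Lemma safe_bad_entails (beta phi : formula S) :
  entails phi (F_not beta) -> safe (Problem iota tau (F_not phi)) ->
  safe (Problem iota tau beta).
Proof.
move=> phi_not_beta sf D d0 s k tr s0 sk.
apply: (sf D d0 s k tr s0) => e phi_e.
exact: (phi_not_beta D d0 (s k) e phi_e (sk e)).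
Qed.

Lemma safe_restrict (beta phi : formula S) :
  invariant phi ->
  safe (Problem (F_and iota phi)
                (F_and (F_and tau (unprimed phi)) (primed phi))
                (F_and beta phi)) ->
  safe (Problem iota tau beta).
Proof.
move=> inv sf D d0 s k tr s0 sk.
have reach i : i <= k -> models (s i) phi.
  by move=> le_ik; apply: inv d0 _ _ (is_trace_prefix le_ik tr) s0.
apply: (sf D d0 s k) => [i lt_ik e|e|e] /=.
- split; first split; first exact: tr.
    by apply/(holds_flift _ _ false); apply: reach; apply: ltnW.
  by apply/(holds_flift _ _ true); apply: reach.
- by split; [apply: s0 | apply: reach].
- by split; [apply: sk | apply: reach].
Qed.

Lemma safe_rev (beta : formula S) :
  safe (Problem beta (fswap tau) iota) -> safe (Problem iota tau beta).
Proof.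
move=> sf D d0 s k tr s0 sk.
by apply: (sf D d0 _ k (is_trace_rev tr)); rewrite ?subn0 ?subnn.
Qed.

End Safety.

Theorem theorem4p10 (S : vocab) (P : problem S) :
  closed_problem P -> FBI P -> safe P.
Proof.
move=> _; elim=> {P} [iota tau phi _ init_phi step_phi
                    |iota tau beta phi _ phi_not_beta _ IH
                    |iota tau beta phi closed_phi _ IH_phi _ IH_restr
                    |iota tau beta _ IH_rev].
- exact/invariant_safe_not/inductive_invariant.
- exact: safe_bad_entails phi_not_beta IH.
- exact: safe_restrict (safe_not_invariant closed_phi IH_phi) IH_restr.
- exact: safe_rev.
Qed.
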